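(* Let $(X,d)$ be a complete separable metric space without isolated points and let $f\colon X\to X$ be a continuous map. Then the following assertions are equivalent: (1) there exists a dense, uniformly Li-Yorke scrambled set in $X$; (2) $f$ is densely uniformly Li-Yorke chaotic; (3) there exists a dense, $\sigma$-Cantor, uniformly Li-Yorke scrambled set in $X$; (4) for every $k\geq 2$, both $\mathrm{Prox}_k(f)$ and $D_k(f)$ are dense in $X^k$.
   Context: A subset $S\subset X$ with at least two points is uniformly Li-Yorke scrambled for $f$ if there exist two sequences $\{p_n\}$, $\{q_n\}$ in $\mathbb{N}$ such that for all $x,y\in S$ with $x\neq y$: $\lim_{n\to\infty} d(f^{p_n}(x),f^{p_n}(y))=0$ and $\lim_{n\to\infty} d(f^{q_n}(x),f^{q_n}(y))=\infty$. The map $f$ is densely uniformly Li-Yorke chaotic if there exists a dense, uncountable, uniformly Li-Yorke scrambled subset of $X$. A Cantor set is a set homeomorphic to the Cantor ternary set; a $\sigma$-Cantor set is a countable union of Cantor sets. For $k\geq 2$, $\mathrm{Prox}_k(f)=\{(x_1,\dots,x_k)\in X^k: \liminf_{n\to\infty}\max_{1\leq i<j\leq k} d(f^n(x_i),f^n(x_j))=0\}$ and $D_k(f)=\{(x_1,\dots,x_k)\in X^k: \limsup_{n\to\infty}\min_{1\leq i<j\leq k} d(f^n(x_i),f^n(x_j))=\infty\}$. *)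

From Stdlib Require Import Reals List.
From Coquelicot Require Import Coquelicot.
Open Scope R_scope.

Section MetricDefs.
Variable X : Type.
Variable d : X -> X -> R.

Record is_metric : Prop := {
  met_nonneg : forall x y, 0 <= d x y;
  met_zero   : forall x y, d x y = 0 <-> x = y;
  met_sym    : forall x y, d x y = d y x;
  met_triang : forall x y z, d x z <= d x y + d y z
}.

Definition cauchy_seq (u : nat -> X) : Prop :=
  forall eps, 0 < eps -> exists N, forall m n, (N <= m)%nat -> (N <= n)%nat ->
    d (u m) (u n) < eps.

Definition converges_to (u : nat -> X) (l : X) : Prop :=
  forall eps, 0 < eps -> exists N, forall n, (N <= n)%nat -> d (u n) l < eps.

Definition complete_metric : Prop :=
  forall u, cauchy_seq u -> exists l, converges_to u l.

Definition dense (S : X -> Prop) : Prop :=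
  forall x eps, 0 < eps -> exists y, S y /\ d x y < eps.

Definition countable (S : X -> Prop) : Prop :=
  exists g : nat -> X, forall x, S x -> exists n, g n = x.

Definition separable : Prop :=
  exists D : X -> Prop, countable D /\ dense D.

Definition no_isolated_points : Prop :=
  forall x eps, 0 < eps -> exists y, y <> x /\ d x y < eps.

Definition continuous_map (f : X -> X) : Prop :=
  forall x eps, 0 < eps -> exists delta, 0 < delta /\
    forall y, d x y < delta -> d (f x) (f y) < eps.

Definition cantor_ternary (t : R) : Prop :=
  exists a : nat -> bool,
    infinite_sum (fun n => (if a n then 2 else 0) / 3 ^ (S n)) t.

(* C is a Cantor set: C is homeomorphic (with the subspace topologies) to the
   Cantor ternary set, via h restricted to cantor_ternary. *)
Definition cantor_set (C : X -> Prop) : Prop :=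
  exists h : R -> X,
    (forall t, cantor_ternary t -> C (h t)) /\
    (forall x, C x -> exists t, cantor_ternary t /\ h t = x) /\
    (forall s t, cantor_ternary s -> cantor_ternary t -> h s = h t -> s = t) /\
    (forall t eps, cantor_ternary t -> 0 < eps -> exists delta, 0 < delta /\
       forall s, cantor_ternary s -> Rabs (s - t) < delta -> d (h s) (h t) < eps) /\
    (* the inverse of h is continuous on C *)
    (forall t eps, cantor_ternary t -> 0 < eps -> exists delta, 0 < delta /\
       forall s, cantor_ternary s -> d (h s) (h t) < delta -> Rabs (s - t) < eps).

Definition sigma_cantor (S : X -> Prop) : Prop :=
  exists C : nat -> (X -> Prop), (forall n, cantor_set (C n)) /\
    forall x, S x <-> exists n, C n x.

Definition uniformly_LY_scrambled (f : X -> X) (S : X -> Prop) : Prop :=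
  (exists x y, S x /\ S y /\ x <> y) /\
  exists p q : nat -> nat,
    forall x y, S x -> S y -> x <> y ->
      is_lim_seq (fun n => d (Nat.iter (p n) f x) (Nat.iter (p n) f y)) 0 /\
      is_lim_seq (fun n => d (Nat.iter (q n) f x) (Nat.iter (q n) f y)) p_infty.

Definition densely_uniformly_LY_chaotic (f : X -> X) : Prop :=
  exists S, dense S /\ ~ countable S /\ uniformly_LY_scrambled f S.

(* points of X^k are represented as g : nat -> X, only coordinates i < k matter *)
Definition pairs (k : nat) : list (nat * nat) :=
  flat_map (fun j => map (fun i => (i, j)) (seq 0 j)) (seq 0 k).

Fixpoint Rmin_list (l : list R) : R :=
  match l with
  | nil => 0
  | a :: nil => a
  | a :: l' => Rmin a (Rmin_list l')
  end.

Definition max_pair_dist (k : nat) (g : nat -> X) : R :=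
  fold_right Rmax 0 (map (fun p => d (g (fst p)) (g (snd p))) (pairs k)).

(* min_{0 <= i < j < k} d (g i) (g j)  (used only for k >= 2) *)
Definition min_pair_dist (k : nat) (g : nat -> X) : R :=
  Rmin_list (map (fun p => d (g (fst p)) (g (snd p))) (pairs k)).

Definition Prox (f : X -> X) (k : nat) (g : nat -> X) : Prop :=
  LimInf_seq (fun n => max_pair_dist k (fun i => Nat.iter n f (g i))) = Finite 0.

Definition Dk (f : X -> X) (k : nat) (g : nat -> X) : Prop :=
  LimSup_seq (fun n => min_pair_dist k (fun i => Nat.iter n f (g i))) = p_infty.

(* P is dense in X^k (product topology, i.e. the max metric) *)
Definition dense_k (k : nat) (P : (nat -> X) -> Prop) : Prop :=
  forall (g : nat -> X) eps, 0 < eps ->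
    exists h, P h /\ forall i, (i < k)%nat -> d (g i) (h i) < eps.

End MetricDefs.

Arguments is_metric {X}.
Arguments complete_metric {X}.
Arguments separable {X}.
Arguments no_isolated_points {X}.
Arguments continuous_map {X}.
Arguments dense {X}.
Arguments countable {X}.
Arguments cantor_set {X}.
Arguments sigma_cantor {X}.
Arguments uniformly_LY_scrambled {X}.
Arguments densely_uniformly_LY_chaotic {X}.
Arguments Prox {X}.
Arguments Dk {X}.
Arguments dense_k {X}.

From Stdlib Require Import Reals List Lia Lra Classical ClassicalEpsilon FunctionalExtensionality.
From Coquelicot Require Import Coquelicot.
Open Scope R_scope.

(* (1) => (4): around any k points choose k distinct points of the dense scrambled set; along
   the common sequences (p_n) and (q_n) all their pairs become simultaneously close, resp. far
   apart, so the tuple lies in Prox_k and in D_k.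
   (4) => (3) is a Mycielski-type construction.  At stage m there is a finite forest: a binary
   tree of depth m - j rooted near the j-th point e_j of a countable dense set, for each j <= m.
   Density of Prox_k and D_k, for k the number of nodes, together with continuity of the
   iterates of f, moves the nodes slightly so that any two points in the balls of radius
   eps_m around two distinct nodes are 1/(m+1)-close at some time p_m and m-far apart at some
   time q_m.  By completeness every branch of the tree rooted at e_j converges, the limits
   of these branches form a Cantor set, and the union of these Cantor sets is dense and
   uniformly scrambled for the times (p_m) and (q_m).
   (3) => (2) because a Cantor set is uncountable, and (2) => (1) is trivial. *)

Lemma fold_right_Rmax_ge (l : list R) r : In r l -> r <= fold_right Rmax 0 l.
Proof.
  induction l as [|a l IH]; simpl; [tauto|].
  intros [<-|Hr]; [apply Rmax_l|].
  apply (Rle_trans _ _ _ (IH Hr)), Rmax_r.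
Qed.

Lemma fold_right_Rmax_lt (l : list R) e :
  0 < e -> (forall r, In r l -> r < e) -> fold_right Rmax 0 l < e.
Proof.
  intros He; induction l as [|a l IH]; simpl; intros Hl; [lra|].
  apply Rmax_lub_lt; auto.
Qed.

Lemma fold_right_Rmax_ge0 (l : list R) : 0 <= fold_right Rmax 0 l.
Proof. induction l; simpl; [lra|]. apply (Rle_trans _ _ _ IHl), Rmax_r. Qed.

Lemma Rmin_list_le (l : list R) r : In r l -> Rmin_list l <= r.
Proof.
  induction l as [|a [|b l] IH]; simpl; [tauto| intros [<-|[]]; lra|].
  intros [<-|Hr]; [apply Rmin_l|].
  apply (Rle_trans _ _ _ (Rmin_r _ _)), IH, Hr.
Qed.

Lemma Rmin_list_gt (l : list R) M :
  l <> nil -> (forall r, In r l -> M < r) -> M < Rmin_list l.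
Proof.
  induction l as [|a [|b l] IH]; intros Hnil Hl; [tauto| apply Hl; simpl; auto|].
  change (M < Rmin a (Rmin_list (b :: l))).
  apply Rmin_glb_lt; [apply Hl; simpl; auto|].
  apply IH; [discriminate| intros r Hr; apply Hl; simpl; auto].
Qed.

Lemma in_pairs k i j : In (i, j) (pairs k) <-> (i < j < k)%nat.
Proof.
  unfold pairs. rewrite in_flat_map. split.
  - intros [j' [Hj' Hij]]. apply in_seq in Hj'.
    apply in_map_iff in Hij as [i' [[= <- <-] Hi']]. apply in_seq in Hi'. lia.
  - intros Hij. exists j. split; [apply in_seq; lia|].
    apply in_map_iff. exists i. split; [reflexivity| apply in_seq; lia].
Qed.

Lemma filter_forall_lt {T : Type} {F : (T -> Prop) -> Prop} {FF : Filter F}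
  (P : nat -> T -> Prop) N :
  (forall i, (i < N)%nat -> F (P i)) -> F (fun x => forall i, (i < N)%nat -> P i x).
Proof.
  induction N as [|N IH]; intros HP.
  - apply filter_forall. intros x i Hi. lia.
  - apply (filter_imp (fun x => (forall i, (i < N)%nat -> P i x) /\ P N x)).
    + intros x [Hlt HN] i Hi. destruct (Nat.eq_dec i N) as [->|]; auto. apply Hlt. lia.
    + apply filter_and; auto.
Qed.

Lemma eventually_forall_pairs (P : nat -> nat -> nat -> Prop) k :
  (forall i j, (i < j < k)%nat -> eventually (P i j)) ->
  eventually (fun n => forall i j, (i < j < k)%nat -> P i j n).
Proof.
  intros HP. apply (filter_imp (fun n => forall j, (j < k)%nat -> forall i, (i < j)%nat -> P i j n)).
  - intros n Hn i j Hij. apply Hn; lia.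
  - apply filter_forall_lt. intros j Hj. apply filter_forall_lt. intros i Hi. apply HP. lia.
Qed.

Lemma eventually_lt_of_lim_0 (u : nat -> R) e :
  is_lim_seq u 0 -> 0 < e -> eventually (fun n => u n < e).
Proof.
  intros Hu He. apply is_lim_seq_spec in Hu. destruct (Hu (mkposreal e He)) as [N HN].
  exists N. intros n Hn. specialize (HN n Hn). apply Rabs_def2 in HN. simpl in HN. lra.
Qed.

Lemma eventually_gt_of_lim_infty (u : nat -> R) M :
  is_lim_seq u p_infty -> eventually (fun n => M < u n).
Proof. intros Hu. apply (Hu (fun r => M < r)). exists M. auto. Qed.

Lemma eventually_index_ge (v : nat -> R) (t : nat -> nat) (P : nat -> R -> Prop) :
  (forall i, eventually (fun n => P i (v (t n)))) -> (forall i, ~ P i (v i)) ->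
  forall N, eventually (fun n => (N <= t n)%nat).
Proof.
  intros Hev Hnot N.
  apply (filter_imp (fun n => forall i, (i < N)%nat -> P i (v (t n)))).
  - intros n Hn. destruct (Nat.le_gt_cases N (t n)) as [|Hlt]; auto.
    destruct (Hnot _ (Hn _ Hlt)).
  - apply filter_forall_lt. auto.
Qed.

Lemma LimInf_seq_eq_0_along (u : nat -> R) (t : nat -> nat) :
  (forall n, 0 <= u n) -> (forall N, eventually (fun n => (N <= t n)%nat)) ->
  (forall e, 0 < e -> eventually (fun n => u (t n) < e)) -> LimInf_seq u = 0.
Proof.
  intros Hu Ht Hut. apply is_LimInf_seq_unique. intros eps. split.
  - intros N. destruct (filter_and _ _ (Ht N) (Hut eps (cond_pos eps))) as [n0 Hn0].
    destruct (Hn0 n0 (le_n _)). exists (t n0). split; auto. lra.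
  - exists O. intros n _. pose proof (Hu n). pose proof (cond_pos eps). lra.
Qed.

Lemma LimSup_seq_eq_infty_along (u : nat -> R) (t : nat -> nat) :
  (forall N, eventually (fun n => (N <= t n)%nat)) ->
  (forall M, eventually (fun n => M < u (t n))) -> LimSup_seq u = p_infty.
Proof.
  intros Ht Hut. apply is_LimSup_seq_unique. intros M N.
  destruct (filter_and _ _ (Ht N) (Hut M)) as [n0 Hn0].
  exists (t n0). apply Hn0. lia.
Qed.

Lemma LimInf_seq_0_lt (u : nat -> R) e : LimInf_seq u = 0 -> 0 < e -> exists n, u n < e.
Proof.
  intros Hu He. pose proof (proj2_sig (ex_LimInf_seq u)) as Hlim. fold (LimInf_seq u) in Hlim.
  rewrite Hu in Hlim. destruct (proj1 (Hlim (mkposreal e He)) O) as [n [_ Hn]].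
  exists n. simpl in Hn. lra.
Qed.

Lemma LimSup_seq_infty_gt (u : nat -> R) M : LimSup_seq u = p_infty -> exists n, M < u n.
Proof.
  intros Hu. pose proof (proj2_sig (ex_LimSup_seq u)) as Hlim. fold (LimSup_seq u) in Hlim.
  rewrite Hu in Hlim. destruct (Hlim M O) as [n [_ Hn]]. eauto.
Qed.

Lemma is_lim_seq_0_of_lt_inv (u : nat -> R) M :
  (forall n, 0 <= u n) -> (forall n, (M <= n)%nat -> u n < / (INR n + 1)) -> is_lim_seq u 0.
Proof.
  intros Hu Hlt. apply is_lim_seq_spec. intros eps.
  destruct (archimed_cor1 eps (cond_pos eps)) as [N [HN HN0]].
  exists (max M N). intros n Hn. rewrite Rminus_0_r, Rabs_right by (apply Rle_ge, Hu).
  assert (INR N <= INR n) by (apply le_INR; lia).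
  assert (0 < INR N) by (apply lt_0_INR; lia).
  assert (/ (INR n + 1) <= / INR N) by (apply Rinv_le_contravar; lra).
  specialize (Hlt n ltac:(lia)). lra.
Qed.

Lemma is_lim_seq_infty_of_gt_INR (u : nat -> R) M :
  (forall n, (M <= n)%nat -> INR n < u n) -> is_lim_seq u p_infty.
Proof.
  intros Hgt. apply is_lim_seq_spec. intros B. destruct (INR_unbounded B) as [N HN].
  exists (max M N). intros n Hn.
  assert (INR N <= INR n) by (apply le_INR; lia).
  specialize (Hgt n ltac:(lia)). lra.
Qed.

Lemma exists_pos_forall_lt (P : nat -> R -> Prop) N b : 0 < b ->
  (forall i e e', 0 < e' <= e -> P i e -> P i e') ->
  (forall i, (i < N)%nat -> exists e, 0 < e /\ P i e) ->
  exists e, 0 < e <= b /\ forall i, (i < N)%nat -> P i e.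
Proof.
  intros Hb Hmon; induction N as [|N IH]; intros HP.
  - exists b. split; [lra| intros; lia].
  - destruct IH as [e1 [He1 H1]]; [intros; apply HP; lia|].
    destruct (HP N) as [e2 [He2 H2]]; [lia|].
    pose proof (Rmin_l e1 e2). pose proof (Rmin_r e1 e2).
    exists (Rmin e1 e2). split; [split; [apply Rmin_pos|]; lra|].
    intros i Hi. destruct (Nat.eq_dec i N) as [->|].
    + apply (Hmon N e2); [split; [apply Rmin_pos|]; lra| assumption].
    + apply (Hmon i e1); [split; [apply Rmin_pos|]; lra| apply H1; lia].
Qed.

Lemma pow_le_compat_decr x m n : 0 <= x <= 1 -> (m <= n)%nat -> x ^ n <= x ^ m.
Proof.
  intros Hx Hmn; induction Hmn as [|n Hmn IH]; [lra|]. simpl.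
  assert (0 <= x ^ n) by (apply pow_le; lra). nra.
Qed.

Lemma pow_lt_eventually x e : 0 <= x < 1 -> 0 < e -> exists n, x ^ n < e.
Proof.
  intros Hx He. destruct (pow_lt_1_zero x ltac:(rewrite Rabs_right; lra) e He) as [N HN].
  exists N. specialize (HN N (le_n _)). rewrite Rabs_right in HN; auto.
  apply Rle_ge, pow_le; lra.
Qed.

Lemma first_difference_lt (a b : nat -> bool) n :
  ~ (forall i, (i < n)%nat -> a i = b i) ->
  exists i, (i < n)%nat /\ (forall j, (j < i)%nat -> a j = b j) /\ a i <> b i.
Proof.
  induction n as [|n IH]; intros Hn; [destruct Hn; intros; lia|].
  destruct (classic (forall i, (i < n)%nat -> a i = b i)) as [Hall|Hnot].
  - exists n. split; [lia| split; auto].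
    intros Habn. apply Hn. intros i Hi. destruct (Nat.eq_dec i n) as [->|]; auto. apply Hall. lia.
  - destruct (IH Hnot) as [i [Hi Hfirst]]. exists i. split; [lia| auto].
Qed.

Section Metric.
Variables (X : Type) (d : X -> X -> R).
Hypothesis Hm : is_metric d.

Lemma dist_ge0 x y : 0 <= d x y. Proof. apply (met_nonneg _ _ Hm). Qed.
Lemma dist_sym x y : d x y = d y x. Proof. apply (met_sym _ _ Hm). Qed.
Lemma dist_triangle x y z : d x z <= d x y + d y z. Proof. apply (met_triang _ _ Hm). Qed.
Lemma dist_refl x : d x x = 0. Proof. apply (met_zero _ _ Hm). reflexivity. Qed.

Lemma dist_pos x y : x <> y -> 0 < d x y.
Proof.
  intros Hxy. destruct (dist_ge0 x y) as [|Hd]; auto.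
  destruct Hxy. apply (met_zero _ _ Hm). auto.
Qed.

Lemma max_pair_dist_ge k g i j : (i < k)%nat -> (j < k)%nat -> i <> j ->
  d (g i) (g j) <= max_pair_dist X d k g.
Proof.
  intros Hi Hj Hij. unfold max_pair_dist. apply fold_right_Rmax_ge, in_map_iff.
  destruct (Nat.lt_gt_cases i j) as [[Hlt|Hlt] _]; [exact Hij| |].
  - exists (i, j). split; [reflexivity| apply in_pairs; lia].
  - exists (j, i). split; [apply dist_sym| apply in_pairs; lia].
Qed.

Lemma max_pair_dist_lt k g e : 0 < e ->
  (forall i j, (i < j < k)%nat -> d (g i) (g j) < e) -> max_pair_dist X d k g < e.
Proof.
  intros He Hg. apply fold_right_Rmax_lt; auto.
  intros r [[i j] [<- Hij]]%in_map_iff. apply Hg, in_pairs, Hij.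
Qed.

Lemma min_pair_dist_le k g i j : (i < k)%nat -> (j < k)%nat -> i <> j ->
  min_pair_dist X d k g <= d (g i) (g j).
Proof.
  intros Hi Hj Hij. unfold min_pair_dist. apply Rmin_list_le, in_map_iff.
  destruct (Nat.lt_gt_cases i j) as [[Hlt|Hlt] _]; [exact Hij| |].
  - exists (i, j). split; [reflexivity| apply in_pairs; lia].
  - exists (j, i). split; [apply dist_sym| apply in_pairs; lia].
Qed.

Lemma min_pair_dist_gt k g M : (2 <= k)%nat ->
  (forall i j, (i < j < k)%nat -> M < d (g i) (g j)) -> M < min_pair_dist X d k g.
Proof.
  intros Hk Hg. apply Rmin_list_gt.
  - intros Hnil. assert (H01 : In (0%nat, 1%nat) (pairs k)) by (apply in_pairs; lia).
    apply (in_map (fun p => d (g (fst p)) (g (snd p)))) in H01. rewrite Hnil in H01. destruct H01.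
  - intros r [[i j] [<- Hij]]%in_map_iff. apply Hg, in_pairs, Hij.
Qed.

(** * Cantor sets *)

Definition ternary_digit (a : nat -> bool) (n : nat) : R := (if a n then 2 else 0) / 3 ^ (S n).

Lemma ternary_digit_eq a n : ternary_digit a n = if a n then 2 * (/3) ^ (S n) else 0.
Proof. unfold ternary_digit. rewrite pow_inv. destruct (a n); field; apply pow_nonzero; lra. Qed.

Fixpoint ternary_partial (a : nat -> bool) (n : nat) : R :=
  match n with O => 0 | S n => ternary_partial a n + ternary_digit a n end.

Lemma sum_f_R0_ternary a n : sum_f_R0 (ternary_digit a) n = ternary_partial a (S n).
Proof. induction n as [|n IH]; simpl; [lra| rewrite IH; reflexivity]. Qed.

Lemma pow_inv3_pos n : 0 < (/3) ^ n.
Proof. apply pow_lt; lra. Qed.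

Lemma ternary_partial_incr a n m : (n <= m)%nat ->
  0 <= ternary_partial a m - ternary_partial a n <= (/3) ^ n - (/3) ^ m.
Proof.
  intros Hnm; induction Hnm as [|m Hnm IH]; [lra|].
  simpl ternary_partial. rewrite ternary_digit_eq. simpl pow.
  pose proof (pow_inv3_pos m). destruct (a m); lra.
Qed.

Lemma ternary_value_bounds a t : infinite_sum (ternary_digit a) t ->
  forall n, ternary_partial a n <= t <= ternary_partial a n + (/3) ^ n.
Proof.
  intros Ht n.
  assert (Happrox : forall eps, eps > 0 ->
            ternary_partial a n - eps <= t <= ternary_partial a n + (/3) ^ n + eps).
  { intros eps Heps. destruct (Ht eps Heps) as [N HN].
    specialize (HN (max N n) (Nat.le_max_l _ _)).
    rewrite sum_f_R0_ternary in HN. apply Rabs_def2 in HN.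
    pose proof (ternary_partial_incr a n (S (max N n)) ltac:(lia)).
    pose proof (pow_inv3_pos (S (max N n))). lra. }
  split; apply Rnot_lt_le; intros Hlt.
  - destruct (Happrox ((ternary_partial a n - t) / 2)); lra.
  - destruct (Happrox ((t - ternary_partial a n - (/3) ^ n) / 2)); lra.
Qed.

Lemma ternary_partial_ext a b n :
  (forall i, (i < n)%nat -> a i = b i) -> ternary_partial a n = ternary_partial b n.
Proof.
  induction n as [|n IH]; intros Hab; simpl; [reflexivity|].
  rewrite IH by (intros; apply Hab; lia). unfold ternary_digit. rewrite Hab by lia. reflexivity.
Qed.

Section TernaryExpansions.
Variables (a b : nat -> bool) (s t : R).
Hypotheses (Hs : infinite_sum (ternary_digit a) s) (Ht : infinite_sum (ternary_digit b) t).

Lemma ternary_close n : (forall i, (i < n)%nat -> a i = b i) -> Rabs (s - t) <= (/3) ^ n.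
Proof.
  intros Hab. pose proof (ternary_value_bounds a s Hs n). pose proof (ternary_value_bounds b t Ht n).
  rewrite (ternary_partial_ext a b n Hab) in *. apply Rabs_le. lra.
Qed.

Lemma ternary_far n : (forall i, (i < n)%nat -> a i = b i) -> a n <> b n ->
  (/3) ^ (S n) <= Rabs (s - t).
Proof.
  intros Hab Hn.
  pose proof (ternary_value_bounds a s Hs (S n)). pose proof (ternary_value_bounds b t Ht (S n)).
  simpl ternary_partial in *. rewrite (ternary_partial_ext a b n Hab), !ternary_digit_eq in *.
  pose proof (pow_inv3_pos (S n)).
  destruct (a n), (b n); try congruence; [rewrite Rabs_right| rewrite Rabs_left1]; lra.
Qed.

Lemma ternary_agree n : Rabs (s - t) < (/3) ^ n -> forall i, (i < n)%nat -> a i = b i.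
Proof.
  intros Hst. apply NNPP. intros Hdiff.
  destruct (first_difference_lt a b n Hdiff) as [i [Hi [Hfirst Habi]]].
  pose proof (ternary_far i Hfirst Habi).
  pose proof (pow_le_compat_decr (/3) (S i) n ltac:(lra) Hi). lra.
Qed.

End TernaryExpansions.

Lemma ternary_digits_unique a b t :
  infinite_sum (ternary_digit a) t -> infinite_sum (ternary_digit b) t -> a = b.
Proof.
  intros Ha Hb. apply functional_extensionality. intros i.
  apply (ternary_agree a b t t Ha Hb (S i)); [|lia].
  rewrite Rminus_diag, Rabs_R0. apply pow_inv3_pos.
Qed.

Lemma ternary_value_exists a : exists t, infinite_sum (ternary_digit a) t.
Proof.
  assert (Hex : ex_series (ternary_digit a)).
  { apply (@ex_series_le R_AbsRing R_CompleteNormedModule _ (fun n => (/3) ^ n * 2)).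
    - intros n. rewrite ternary_digit_eq. change norm with Rabs. simpl pow.
      pose proof (pow_inv3_pos n). destruct (a n); [rewrite Rabs_right| rewrite Rabs_R0]; lra.
    - apply (ex_series_scal_r 2 (fun n => (/3) ^ n)), ex_series_geom.
      rewrite Rabs_right; lra. }
  destruct Hex as [t Ht]. exists t. apply is_series_Reals, Ht.
Qed.

Definition ternary_digits (t : R) : nat -> bool :=
  epsilon (inhabits (fun _ => false)) (fun a => infinite_sum (ternary_digit a) t).

Lemma ternary_digits_spec t : cantor_ternary t -> infinite_sum (ternary_digit (ternary_digits t)) t.
Proof. intros Ht. unfold ternary_digits. apply epsilon_spec, Ht. Qed.

Lemma ternary_digits_of a t : infinite_sum (ternary_digit a) t -> ternary_digits t = a.
Proof.
  intros Ht. apply (ternary_digits_unique _ _ t); auto. apply ternary_digits_spec. exists a. exact Ht.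
Qed.

Lemma cantor_set_of_coding (phi : (nat -> bool) -> X) (r sep : nat -> R) :
  (forall e, 0 < e -> exists n, r n < e) ->
  (forall a b n, (forall i, (i < n)%nat -> a i = b i) -> d (phi a) (phi b) <= r n) ->
  (forall n, 0 < sep n) ->
  (forall a b n, (forall i, (i < n)%nat -> a i = b i) -> a n <> b n -> sep n <= d (phi a) (phi b)) ->
  cantor_set d (fun x => exists a, x = phi a).
Proof.
  intros Hr Hclose Hsep_pos Hsep.
  assert (Hagree : forall a b n, (forall i, (i < n)%nat -> d (phi a) (phi b) < sep i) ->
            forall i, (i < n)%nat -> a i = b i).
  { intros a b n Hd. apply NNPP. intros Hdiff.
    destruct (first_difference_lt a b n Hdiff) as [i [Hi [Hfirst Habi]]].
    specialize (Hsep a b i Hfirst Habi). specialize (Hd i Hi). lra. }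
  exists (fun t => phi (ternary_digits t)).
  split; [|split; [|split; [|split]]].
  - intros t _. eauto.
  - intros x [a ->]. destruct (ternary_value_exists a) as [t Ht].
    exists t. split; [exists a; exact Ht| rewrite (ternary_digits_of a t Ht); reflexivity].
  - intros s t Hs Ht Hst.
    assert (Hdigits : ternary_digits s = ternary_digits t).
    { apply functional_extensionality. intros i. apply (Hagree _ _ (S i)); [|lia].
      intros j _. rewrite Hst, dist_refl. apply Hsep_pos. }
    apply (uniqueness_sum (ternary_digit (ternary_digits s))); [apply ternary_digits_spec; auto|].
    rewrite Hdigits. apply ternary_digits_spec; auto.
  - intros t eps Ht Heps. destruct (Hr eps Heps) as [n Hn].
    exists ((/3) ^ n). split; [apply pow_inv3_pos|]. intros s Hs Hst.
    apply (Rle_lt_trans _ (r n)); auto. apply Hclose.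
    apply (ternary_agree _ _ s t); auto; apply ternary_digits_spec; auto.
  - intros t eps Ht Heps.
    destruct (pow_lt_eventually (/3) eps ltac:(lra) Heps) as [n Hn].
    destruct (exists_pos_forall_lt (fun i e => e <= sep i) n 1 Rlt_0_1) as [e [[He _] Hesep]].
    { intros; lra. }
    { intros i _. exists (sep i). split; [apply Hsep_pos| lra]. }
    exists e. split; auto. intros s Hs Hst.
    apply (Rle_lt_trans _ ((/3) ^ n)); auto.
    apply (ternary_close (ternary_digits s) (ternary_digits t)); try apply ternary_digits_spec; auto.
    apply Hagree. intros i Hi. specialize (Hesep i Hi). lra.
Qed.

Lemma cantor_set_not_countable (C S : X -> Prop) :
  cantor_set d C -> (forall x, C x -> S x) -> ~ countable S.
Proof.
  intros [h [HhC [Hsurj [Hinj _]]]] HCS [g Hg].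
  set (T n := epsilon (inhabits 0) (fun t => cantor_ternary t /\ h t = g n)).
  (* Cantor's diagonal argument on the digit sequences of the [T n]. *)
  set (a n := negb (ternary_digits (T n) n)).
  destruct (ternary_value_exists a) as [t Ht].
  assert (Hct : cantor_ternary t) by (exists a; exact Ht).
  destruct (Hg (h t) (HCS _ (HhC t Hct))) as [n Hn].
  assert (HTn : cantor_ternary (T n) /\ h (T n) = g n).
  { unfold T. apply epsilon_spec. exists t. auto. }
  assert (HTt : T n = t) by (apply Hinj; [apply HTn| exact Hct| rewrite <- Hn; apply HTn]).
  assert (Han : a n = negb (a n)).
  { unfold a at 1. rewrite HTt, (ternary_digits_of a t Ht). reflexivity. }
  destruct (a n); discriminate.
Qed.

Lemma sigma_cantor_not_countable (S : X -> Prop) :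
  sigma_cantor d S -> (exists x, S x) -> ~ countable S.
Proof.
  intros [C [HC HCS]] [x Sx]. destruct (proj1 (HCS x) Sx) as [n _].
  apply (cantor_set_not_countable (C n) S (HC n)). intros y Hy. apply HCS. eauto.
Qed.

(** * Proximal and distal tuples *)

Variable f : X -> X.
Hypothesis Hf : continuous_map d f.

Lemma iter_continuous n : continuous_map d (Nat.iter n f).
Proof.
  induction n as [|n IH]; intros x eps Heps; [exists eps; auto|].
  destruct (Hf (Nat.iter n f x) eps Heps) as [del1 [Hdel1 H1]].
  destruct (IH x del1 Hdel1) as [del2 [Hdel2 H2]].
  exists del2. split; auto. intros y Hy. apply H1, H2, Hy.
Qed.

Definition orbit_dist (x y : X) (n : nat) : R := d (Nat.iter n f x) (Nat.iter n f y).

Lemma times_to_infty_of_lim_infty x y (q : nat -> nat) :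
  is_lim_seq (fun n => orbit_dist x y (q n)) p_infty ->
  forall N, eventually (fun n => (N <= q n)%nat).
Proof.
  intros Hq. apply (eventually_index_ge (orbit_dist x y) q (fun i r => orbit_dist x y i < r)).
  - intros i. apply (eventually_gt_of_lim_infty (fun n => orbit_dist x y (q n))), Hq.
  - intros i. apply Rlt_irrefl.
Qed.

Lemma iter_neq_of_lim_infty x y (q : nat -> nat) :
  is_lim_seq (fun n => orbit_dist x y (q n)) p_infty ->
  forall P, Nat.iter P f x <> Nat.iter P f y.
Proof.
  intros Hq P Hxy.
  destruct (filter_and _ _ (times_to_infty_of_lim_infty x y q Hq P)
              (eventually_gt_of_lim_infty _ 0 Hq)) as [n0 Hn0].
  destruct (Hn0 n0 (le_n _)) as [HP Hpos]. unfold orbit_dist in Hpos.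
  replace (q n0) with (q n0 - P + P)%nat in Hpos by lia.
  rewrite !Nat.iter_add, Hxy, dist_refl in Hpos. lra.
Qed.

Lemma times_to_infty_of_lim_0 x y (p : nat -> nat) :
  (forall P, Nat.iter P f x <> Nat.iter P f y) ->
  is_lim_seq (fun n => orbit_dist x y (p n)) 0 ->
  forall N, eventually (fun n => (N <= p n)%nat).
Proof.
  intros Hxy Hp. apply (eventually_index_ge (orbit_dist x y) p (fun i r => r < orbit_dist x y i)).
  - intros i. apply (eventually_lt_of_lim_0 (fun n => orbit_dist x y (p n))); auto.
    apply dist_pos, Hxy.
  - intros i. apply Rlt_irrefl.
Qed.

Lemma scrambled_tuple_Prox_Dk (S : X -> Prop) (p q : nat -> nat) k (h : nat -> X) :
  (forall x y, S x -> S y -> x <> y ->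
     is_lim_seq (fun n => orbit_dist x y (p n)) 0 /\
     is_lim_seq (fun n => orbit_dist x y (q n)) p_infty) ->
  (2 <= k)%nat -> (forall i, (i < k)%nat -> S (h i)) ->
  (forall i j, (i < k)%nat -> (j < k)%nat -> i <> j -> h i <> h j) ->
  Prox d f k h /\ Dk d f k h.
Proof.
  intros HS Hk Hh Hinj.
  assert (Hpair : forall i j, (i < j < k)%nat ->
            is_lim_seq (fun n => orbit_dist (h i) (h j) (p n)) 0 /\
            is_lim_seq (fun n => orbit_dist (h i) (h j) (q n)) p_infty).
  { intros i j Hij. apply HS; try apply Hh; try apply Hinj; lia. }
  destruct (Hpair 0%nat 1%nat ltac:(lia)) as [Hp01 Hq01].
  split.
  - apply (LimInf_seq_eq_0_along _ p).
    + intros n. apply fold_right_Rmax_ge0.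
    + apply (times_to_infty_of_lim_0 (h 0%nat) (h 1%nat)); auto.
      apply (iter_neq_of_lim_infty _ _ q Hq01).
    + intros e He. apply (filter_imp (fun n => forall i j, (i < j < k)%nat ->
                                        orbit_dist (h i) (h j) (p n) < e)).
      * intros n Hn. apply max_pair_dist_lt; auto.
      * apply eventually_forall_pairs. intros i j Hij.
        apply (eventually_lt_of_lim_0 (fun n => orbit_dist (h i) (h j) (p n))); auto.
        apply Hpair, Hij.
  - apply (LimSup_seq_eq_infty_along _ q).
    + apply (times_to_infty_of_lim_infty _ _ q Hq01).
    + intros M. apply (filter_imp (fun n => forall i j, (i < j < k)%nat ->
                                     M < orbit_dist (h i) (h j) (q n))).
      * intros n Hn. apply min_pair_dist_gt; auto.
      * apply eventually_forall_pairs. intros i j Hij.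
        apply (eventually_gt_of_lim_infty (fun n => orbit_dist (h i) (h j) (q n))), Hpair, Hij.
Qed.

Hypothesis Hniso : no_isolated_points d.

Lemma ball_avoiding_list (L : list X) x r : 0 < r ->
  exists z rho, 0 < rho /\ forall y, d z y < rho -> d x y < r /\ ~ In y L.
Proof.
  induction L as [|a L IH]; intros Hr.
  - exists x, r. split; [exact Hr|]. intros y Hy. split; [exact Hy| intros []].
  - destruct (IH Hr) as [z [rho [Hrho Hball]]].
    (* Move the centre off [a] if necessary, then shrink the ball so as to miss [a]. *)
    assert (Hz' : exists z', z' <> a /\ d z z' < rho / 2).
    { destruct (classic (z = a)) as [->|Hza].
      - destruct (Hniso a (rho / 2) ltac:(lra)) as [z' [Hz'a Hd]]. eauto.
      - exists z. rewrite dist_refl. split; auto. lra. }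
    destruct Hz' as [z' [Hz'a Hzz']].
    pose proof (dist_pos _ _ Hz'a).
    pose proof (Rmin_l (rho / 2) (d z' a)). pose proof (Rmin_r (rho / 2) (d z' a)).
    exists z', (Rmin (rho / 2) (d z' a)). split; [apply Rmin_pos; lra|].
    intros y Hy. pose proof (dist_triangle z z' y).
    destruct (Hball y ltac:(lra)) as [Hxy HyL]. split; auto.
    intros [->|HyL']; [lra| auto].
Qed.

Lemma dense_injective_approx (S : X -> Prop) : dense d S ->
  forall (g : nat -> X) eps k, 0 < eps ->
  exists h, (forall i, (i < k)%nat -> S (h i) /\ d (g i) (h i) < eps) /\
            (forall i j, (i < k)%nat -> (j < k)%nat -> i <> j -> h i <> h j).
Proof.
  intros HS g eps k Heps. induction k as [|k [h [Hh Hinj]]].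
  - exists g. split; intros; lia.
  - destruct (ball_avoiding_list (map h (seq 0 k)) (g k) eps Heps) as [z [rho [Hrho Hball]]].
    destruct (HS z rho Hrho) as [y [Sy Hy]]. destruct (Hball y Hy) as [Hgy Hynew].
    assert (Hyh : forall i, (i < k)%nat -> y <> h i).
    { intros i Hi ->. apply Hynew, in_map, in_seq. lia. }
    exists (fun i => if Nat.eq_dec i k then y else h i). split.
    + intros i Hi. destruct (Nat.eq_dec i k) as [->|]; auto. apply Hh. lia.
    + intros i j Hi Hj Hij.
      destruct (Nat.eq_dec i k), (Nat.eq_dec j k); subst; try lia.
      * apply Hyh. lia.
      * intros Heq. apply (Hyh i); [lia| auto].
      * apply Hinj; lia.
Qed.

Lemma dense_scrambled_Prox_Dk (S : X -> Prop) :
  dense d S -> uniformly_LY_scrambled d f S ->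
  forall k, (2 <= k)%nat -> dense_k d k (Prox d f k) /\ dense_k d k (Dk d f k).
Proof.
  intros HS [_ [p [q Hpq]]] k Hk.
  assert (Happrox : forall g eps, 0 < eps -> exists h,
            (Prox d f k h /\ Dk d f k h) /\ forall i, (i < k)%nat -> d (g i) (h i) < eps).
  { intros g eps Heps. destruct (dense_injective_approx S HS g eps k Heps) as [h [Hh Hinj]].
    exists h. split; [| intros i Hi; apply Hh, Hi].
    apply (scrambled_tuple_Prox_Dk S p q); auto. intros i Hi. apply Hh, Hi. }
  split; intros g eps Heps; destruct (Happrox g eps Heps) as [h [[HP HD] Hh]]; eauto.
Qed.

(** * The Mycielski-type construction *)

Definition initial_bits (a : nat -> bool) (n : nat) : list bool := map a (seq 0 n).

Lemma initial_bits_S a n : initial_bits a (S n) = initial_bits a n ++ a n :: nil.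
Proof. unfold initial_bits. rewrite seq_S, map_app. reflexivity. Qed.

Lemma length_initial_bits a n : length (initial_bits a n) = n.
Proof. unfold initial_bits. rewrite length_map, length_seq. reflexivity. Qed.

Lemma nth_initial_bits a n i : (i < n)%nat -> nth i (initial_bits a n) false = a i.
Proof.
  intros Hi. rewrite (nth_indep _ false (a O)) by (rewrite length_initial_bits; lia).
  unfold initial_bits. rewrite map_nth, seq_nth by lia. reflexivity.
Qed.

Lemma initial_bits_ext a b n :
  (forall i, (i < n)%nat -> a i = b i) -> initial_bits a n = initial_bits b n.
Proof. intros Hab. apply map_ext_in. intros i Hi. apply in_seq in Hi. apply Hab. lia. Qed.

Fixpoint bool_lists (n : nat) : list (list bool) :=
  match n with
  | O => nil :: nil
  | S n => flat_map (fun s => (s ++ false :: nil) :: (s ++ true :: nil) :: nil) (bool_lists n)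
  end.

Lemma in_bool_lists s : In s (bool_lists (length s)).
Proof.
  induction s as [|b s IH] using rev_ind; simpl; [auto|].
  rewrite length_app, Nat.add_1_r. simpl. apply in_flat_map. exists s. split; auto.
  destruct b; simpl; auto.
Qed.

(* Node [(j, s)] is the vertex [s] of the binary tree rooted at stage [j]. *)
Definition node : Type := (nat * list bool)%type.

Definition nodes_at (m : nat) : list node :=
  flat_map (fun j => map (fun s => (j, s)) (bool_lists (m - j))) (seq 0 (S m)).

Lemma in_nodes_at m j s : (j <= m)%nat -> length s = (m - j)%nat -> In (j, s) (nodes_at m).
Proof.
  intros Hj Hs. apply in_flat_map. exists j. split; [apply in_seq; lia|].
  apply in_map. rewrite <- Hs. apply in_bool_lists.
Qed.

Fixpoint index_in {A : Type} (L : list A) (a : A) : nat :=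
  match L with
  | nil => O
  | b :: L' => if excluded_middle_informative (b = a) then O else S (index_in L' a)
  end.

Lemma index_in_spec {A : Type} (L : list A) (a0 a : A) :
  In a L -> (index_in L a < length L)%nat /\ nth (index_in L a) L a0 = a.
Proof.
  induction L as [|b L IH]; simpl; [tauto|]. intros Ha.
  destruct (excluded_middle_informative (b = a)) as [->|Hba]; [split; [lia| auto]|].
  destruct Ha as [->|Ha]; [tauto|]. destruct (IH Ha). split; [lia| auto].
Qed.

Lemma dense_Prox_perturb N : dense_k d N (Prox d f N) ->
  forall (g : nat -> X) r th, 0 < r -> 0 < th ->
  exists h p del, 0 < del /\ (forall i, (i < N)%nat -> d (g i) (h i) < r) /\
    forall i j x y, (i < N)%nat -> (j < N)%nat -> i <> j ->
      d (h i) x < del -> d (h j) y < del -> orbit_dist x y p < th.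
Proof.
  intros HP g r th Hr Hth. destruct (HP g r Hr) as [h [Hprox Hgh]].
  destruct (LimInf_seq_0_lt _ (th / 3) Hprox ltac:(lra)) as [p Hp].
  destruct (exists_pos_forall_lt (fun i del => forall y, d (h i) y < del ->
              d (Nat.iter p f (h i)) (Nat.iter p f y) < th / 3) N 1 Rlt_0_1)
    as [del [[Hdel _] Hcont]].
  { intros i del del' Hdel' Hi y Hy. apply Hi. lra. }
  { intros i _. apply (iter_continuous p (h i) (th / 3)). lra. }
  exists h, p, del. split; [| split]; auto.
  intros i j x y Hi Hj Hij Hx Hy. unfold orbit_dist.
  pose proof (Hcont i Hi x Hx). pose proof (Hcont j Hj y Hy).
  pose proof (max_pair_dist_ge N (fun i => Nat.iter p f (h i)) i j Hi Hj Hij).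
  pose proof (dist_triangle (Nat.iter p f x) (Nat.iter p f (h i)) (Nat.iter p f y)).
  pose proof (dist_triangle (Nat.iter p f (h i)) (Nat.iter p f (h j)) (Nat.iter p f y)).
  pose proof (dist_sym (Nat.iter p f x) (Nat.iter p f (h i))). cbn beta in *. lra.
Qed.

Lemma dense_Dk_perturb N : (2 <= N)%nat -> dense_k d N (Dk d f N) ->
  forall (h : nat -> X) r M, 0 < r ->
  exists w q, (forall i, (i < N)%nat -> d (h i) (w i) < r) /\
    forall i j, (i < N)%nat -> (j < N)%nat -> i <> j -> M < orbit_dist (w i) (w j) q.
Proof.
  intros HN HD h r M Hr. destruct (HD h r Hr) as [w [Hdk Hhw]].
  destruct (LimSup_seq_infty_gt _ M Hdk) as [q Hq].
  exists w, q. split; auto. intros i j Hi Hj Hij.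
  apply (Rlt_le_trans _ _ _ Hq), (min_pair_dist_le N (fun i => Nat.iter q f (w i))); auto.
Qed.

Lemma small_separating_radius (F : X -> X) N (w : nat -> X) c b :
  continuous_map d F -> 0 < c -> 0 < b ->
  (forall i j, (i < N)%nat -> (j < N)%nat -> i <> j -> w i <> w j) ->
  exists eps, 0 < eps /\ eps <= b /\
    (forall i j, (i < N)%nat -> (j < N)%nat -> i <> j -> 3 * eps <= d (w i) (w j)) /\
    (forall i y, (i < N)%nat -> d (w i) y <= eps -> d (F (w i)) (F y) < c).
Proof.
  intros HF Hc Hb Hinj.
  destruct (exists_pos_forall_lt (fun i eps =>
              (forall j, (j < N)%nat -> i <> j -> 3 * eps <= d (w i) (w j)) /\
              (forall y, d (w i) y <= eps -> d (F (w i)) (F y) < c)) N b Hb) as [eps [Heps Hall]].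
  { intros i e e' He' [Hsep Hcont]. split.
    - intros j Hj Hij. specialize (Hsep j Hj Hij). lra.
    - intros y Hy. apply Hcont. lra. }
  { intros i Hi. destruct (HF (w i) c Hc) as [del [Hdel Hcont]].
    destruct (exists_pos_forall_lt (fun j e => i <> j -> 3 * e <= d (w i) (w j)) N (del / 2))
      as [e [He Hsep]]; [lra| | |].
    { intros j e e' He' Hj Hij. specialize (Hj Hij). lra. }
    { intros j Hj. destruct (Nat.eq_dec i j) as [->|Hij].
      - exists 1. split; [lra| tauto].
      - exists (d (w i) (w j) / 3). pose proof (dist_pos _ _ (Hinj i j Hi Hj Hij)).
        split; [lra| intros; lra]. }
    exists e. split; [lra| split; auto].
    intros y Hy. apply Hcont. lra. }
  exists eps. split; [lra| split; [lra| split]].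
  - intros i j Hi Hj Hij. apply (Hall i Hi); auto.
  - intros i y Hi Hy. apply (Hall i Hi); auto.
Qed.

Definition scrambled_at (m p q : nat) (x y : X) : Prop :=
  orbit_dist x y p < / (INR m + 1) /\ INR m < orbit_dist x y q.

Section Construction.
Hypothesis Hcomp : complete_metric d.
Hypothesis HProxDk : forall k, (2 <= k)%nat -> dense_k d k (Prox d f k) /\ dense_k d k (Dk d f k).

Lemma scrambling_perturbation N (g : nat -> X) eta m : 0 < eta ->
  exists w eps p q, 0 < eps <= eta /\
    (forall i, (i < N)%nat -> d (g i) (w i) < eta) /\
    (forall i j, (i < N)%nat -> (j < N)%nat -> i <> j -> 3 * eps <= d (w i) (w j)) /\
    (forall i j x y, (i < N)%nat -> (j < N)%nat -> i <> j ->
       d (w i) x <= eps -> d (w j) y <= eps -> scrambled_at m p q x y).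
Proof.
  intros Heta. destruct (Nat.le_gt_cases N 1) as [HN|HN].
  { exists g, eta, O, O. split; [lra| split; [| split; intros; lia]].
    intros i _. rewrite dist_refl. exact Heta. }
  destruct (HProxDk N ltac:(lia)) as [HP HD]. pose proof (pos_INR m).
  destruct (dense_Prox_perturb N HP g (eta / 2) (/ (INR m + 1)))
    as [h [p [del [Hdel [Hgh Hprox]]]]]; [lra| apply Rinv_0_lt_compat; lra|].
  pose proof (Rmin_l (eta / 2) (del / 2)). pose proof (Rmin_r (eta / 2) (del / 2)).
  destruct (dense_Dk_perturb N ltac:(lia) HD h (Rmin (eta / 2) (del / 2)) (INR m + 1))
    as [w [q [Hhw Hfar]]]; [apply Rmin_pos; lra|].
  assert (Hinj : forall i j, (i < N)%nat -> (j < N)%nat -> i <> j -> w i <> w j).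
  { intros i j Hi Hj Hij Heq. specialize (Hfar i j Hi Hj Hij).
    unfold orbit_dist in Hfar. rewrite Heq, dist_refl in Hfar. lra. }
  destruct (small_separating_radius (Nat.iter q f) N w (1 / 2) (Rmin (eta / 2) (del / 2))
              (iter_continuous q)) as [eps [Heps [Hepsb [Hsep Hcont]]]]; [lra| apply Rmin_pos; lra| auto|].
  exists w, eps, p, q. split; [lra| split; [| split; [exact Hsep|]]].
  - intros i Hi. pose proof (Hgh i Hi). pose proof (Hhw i Hi).
    pose proof (dist_triangle (g i) (h i) (w i)). lra.
  - intros i j x y Hi Hj Hij Hx Hy. split.
    + pose proof (Hhw i Hi). pose proof (Hhw j Hj).
      pose proof (dist_triangle (h i) (w i) x). pose proof (dist_triangle (h j) (w j) y).
      apply (Hprox i j); auto; lra.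
    + pose proof (Hcont i x Hi Hx). pose proof (Hcont j y Hj Hy). pose proof (Hfar i j Hi Hj Hij).
      unfold orbit_dist in *.
      pose proof (dist_triangle (Nat.iter q f (w i)) (Nat.iter q f x) (Nat.iter q f (w j))).
      pose proof (dist_triangle (Nat.iter q f x) (Nat.iter q f y) (Nat.iter q f (w j))).
      pose proof (dist_sym (Nat.iter q f y) (Nat.iter q f (w j))). lra.
Qed.

Lemma scrambling_perturbation_list {A : Type} (L : list A) (g : A -> X) eta m : 0 < eta ->
  exists w eps p q, 0 < eps <= eta /\
    (forall a, In a L -> d (g a) (w a) < eta) /\
    (forall a b, In a L -> In b L -> a <> b -> 3 * eps <= d (w a) (w b)) /\
    (forall a b x y, In a L -> In b L -> a <> b ->
       d (w a) x <= eps -> d (w b) y <= eps -> scrambled_at m p q x y).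
Proof.
  intros Heta. destruct L as [|a0 L'] eqn:HL.
  { exists g, eta, O, O. split; [lra| split; [| split]]; intros; simpl in *; tauto. }
  rewrite <- HL.
  destruct (scrambling_perturbation (length L) (fun i => g (nth i L a0)) eta m Heta)
    as [w [eps [p [q [Heps [Hgw [Hsep Hscr]]]]]]].
  exists (fun a => w (index_in L a)), eps, p, q.
  assert (Hidx : forall a b, In a L -> In b L -> a <> b ->
            (index_in L a < length L)%nat /\ (index_in L b < length L)%nat /\
            index_in L a <> index_in L b).
  { intros a b Ha Hb Hab. destruct (index_in_spec L a0 a Ha) as [Hia Hna].
    destruct (index_in_spec L a0 b Hb) as [Hib Hnb].
    split; [| split]; auto. intros Heq. apply Hab. rewrite <- Hna, <- Hnb, Heq. reflexivity. }
  split; [exact Heps| split; [| split]].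
  - intros a Ha. destruct (index_in_spec L a0 a Ha) as [Hia Hna].
    specialize (Hgw _ Hia). rewrite Hna in Hgw. exact Hgw.
  - intros a b Ha Hb Hab. destruct (Hidx a b Ha Hb Hab) as [? [? ?]]. apply Hsep; auto.
  - intros a b x y Ha Hb Hab. destruct (Hidx a b Ha Hb Hab) as [? [? ?]]. apply Hscr; auto.
Qed.

Variable e : nat -> X.

Record stage : Type := {
  stage_point : node -> X;
  stage_radius : R;
  stage_ptime : nat;
  stage_qtime : nat
}.

(* At stage [m] the new root [(m, nil)] is placed near [e m]; every other node is placed near
   the position of its parent at the previous stage. *)
Definition stage_target (m : nat) (prev : node -> X) (n : node) : X :=
  if Nat.eq_dec (fst n) m then e m else prev (fst n, removelast (snd n)).

Definition stage_spec (m : nat) (prev : node -> X) (r : R) (s : stage) : Prop :=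
  0 < stage_radius s <= r / 2 /\
  (forall n, In n (nodes_at m) -> d (stage_target m prev n) (stage_point s n) < r / 2) /\
  (forall n n', In n (nodes_at m) -> In n' (nodes_at m) -> n <> n' ->
     3 * stage_radius s <= d (stage_point s n) (stage_point s n')) /\
  (forall n n' x y, In n (nodes_at m) -> In n' (nodes_at m) -> n <> n' ->
     d (stage_point s n) x <= stage_radius s -> d (stage_point s n') y <= stage_radius s ->
     scrambled_at m (stage_ptime s) (stage_qtime s) x y).

Definition next_stage (m : nat) (prev : node -> X) (r : R) : stage :=
  epsilon (inhabits (Build_stage prev r O O)) (stage_spec m prev r).

Lemma next_stage_spec m prev r : 0 < r -> stage_spec m prev r (next_stage m prev r).
Proof.
  intros Hr. unfold next_stage. apply epsilon_spec.
  destruct (scrambling_perturbation_list (nodes_at m) (stage_target m prev) (r / 2) m)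
    as [w [eps [p [q [Heps [Hw [Hsep Hscr]]]]]]]; [lra|].
  exists (Build_stage w eps p q). split; [exact Heps| split; [exact Hw| split; [exact Hsep| exact Hscr]]].
Qed.

Fixpoint stage_at (m : nat) : stage :=
  match m with
  | O => next_stage O (fun _ => e O) 1
  | S m' => next_stage (S m') (stage_point (stage_at m')) (stage_radius (stage_at m'))
  end.

Definition prev_point (m : nat) : node -> X :=
  match m with O => fun _ => e O | S m' => stage_point (stage_at m') end.

Definition prev_radius (m : nat) : R :=
  match m with O => 1 | S m' => stage_radius (stage_at m') end.

Definition radius (m : nat) : R := stage_radius (stage_at m).

Lemma stage_at_eq m : stage_at m = next_stage m (prev_point m) (prev_radius m).
Proof. destruct m; reflexivity. Qed.

Lemma radius_bounds m : 0 < radius m <= (/2) ^ S m.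
Proof.
  induction m as [|m IH]; unfold radius; rewrite stage_at_eq.
  - destruct (next_stage_spec O (prev_point O) 1 Rlt_0_1) as [Hr _]. simpl in *. lra.
  - destruct (next_stage_spec (S m) (prev_point (S m)) (radius m) (proj1 IH)) as [Hr _].
    unfold radius in *. simpl in *. lra.
Qed.

Lemma stage_at_spec m : stage_spec m (prev_point m) (prev_radius m) (stage_at m).
Proof.
  rewrite stage_at_eq. apply next_stage_spec.
  destruct m; simpl; [lra| apply radius_bounds].
Qed.

Lemma radius_half m : radius (S m) <= radius m / 2.
Proof. apply (stage_at_spec (S m)). Qed.

Definition branch (j : nat) (a : nat -> bool) (k : nat) : X :=
  stage_point (stage_at (j + k)) (j, initial_bits a k).

Lemma limit_node_in_nodes j a m : (j <= m)%nat -> In (j, initial_bits a (m - j)) (nodes_at m).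
Proof. intros Hj. apply in_nodes_at; [lia| apply length_initial_bits]. Qed.

Lemma branch_step j a k : d (branch j a k) (branch j a (S k)) < radius (j + k) / 2.
Proof.
  unfold branch. rewrite Nat.add_succ_r.
  destruct (stage_at_spec (S (j + k))) as [_ [Htarget _]].
  assert (Hn : In (j, initial_bits a (S k)) (nodes_at (S (j + k)))).
  { apply in_nodes_at; [lia| rewrite length_initial_bits; lia]. }
  specialize (Htarget _ Hn). unfold stage_target in Htarget. cbn [fst snd] in Htarget.
  destruct (Nat.eq_dec j (S (j + k))) as [|_]; [lia|].
  rewrite initial_bits_S, removelast_last, <- initial_bits_S in Htarget. exact Htarget.
Qed.

Lemma branch_root j a : d (e j) (branch j a O) < (/2) ^ S j.
Proof.
  unfold branch. rewrite Nat.add_0_r.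
  destruct (stage_at_spec j) as [_ [Htarget _]].
  specialize (Htarget (j, nil) (in_nodes_at j j nil (le_n _) ltac:(simpl; lia))).
  unfold stage_target in Htarget. cbn [fst snd] in Htarget.
  destruct (Nat.eq_dec j j) as [_|]; [|lia].
  assert (prev_radius j <= (/2) ^ j) by (destruct j; [simpl; lra| apply (radius_bounds j)]).
  apply (Rlt_le_trans _ _ _ Htarget). simpl pow. lra.
Qed.

(* The closed balls around a branch are nested: the centres move by less than half the
   radius, and the radius at least halves. *)
Lemma branch_ball_nested j a k k' : (k <= k')%nat ->
  forall y, d (branch j a k') y <= radius (j + k') -> d (branch j a k) y <= radius (j + k).
Proof.
  intros Hkk'; induction Hkk' as [|k' Hkk' IH]; intros y Hy; auto.
  apply IH. pose proof (branch_step j a k'). pose proof (radius_half (j + k')).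
  rewrite Nat.add_succ_r in Hy.
  pose proof (dist_triangle (branch j a k') (branch j a (S k')) y). lra.
Qed.

Lemma branch_close j a k k' : (k <= k')%nat -> d (branch j a k) (branch j a k') <= radius (j + k).
Proof.
  intros Hkk'. apply (branch_ball_nested j a k k' Hkk').
  rewrite dist_refl. apply Rlt_le, radius_bounds.
Qed.

Lemma branch_cauchy j a : cauchy_seq X d (branch j a).
Proof.
  intros eps Heps. destruct (pow_lt_eventually (/2) eps ltac:(lra) Heps) as [N HN].
  exists N. intros n n' Hn Hn'.
  pose proof (branch_close j a N n Hn). pose proof (branch_close j a N n' Hn').
  pose proof (dist_triangle (branch j a n) (branch j a N) (branch j a n')).
  pose proof (dist_sym (branch j a n) (branch j a N)).
  pose proof (radius_bounds (j + N)).
  pose proof (pow_le_compat_decr (/2) (S N) (S (j + N)) ltac:(lra) ltac:(lia)).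
  simpl pow in *. lra.
Qed.

Definition branch_limit (j : nat) (a : nat -> bool) : X :=
  epsilon (inhabits (e O)) (converges_to X d (branch j a)).

Lemma branch_limit_spec j a : converges_to X d (branch j a) (branch_limit j a).
Proof. unfold branch_limit. apply epsilon_spec, Hcomp, branch_cauchy. Qed.

Lemma branch_limit_near j a k : d (branch j a k) (branch_limit j a) <= radius (j + k).
Proof.
  apply Rnot_lt_le. intros Hlt.
  destruct (branch_limit_spec j a (d (branch j a k) (branch_limit j a) - radius (j + k)))
    as [N HN]; [lra|].
  specialize (HN (max N k) (Nat.le_max_l _ _)).
  pose proof (branch_close j a k (max N k) (Nat.le_max_r _ _)).
  pose proof (dist_triangle (branch j a k) (branch j a (max N k)) (branch_limit j a)). lra.
Qed.

Lemma limit_near_stage j a m : (j <= m)%nat ->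
  d (stage_point (stage_at m) (j, initial_bits a (m - j))) (branch_limit j a) <= radius m.
Proof.
  intros Hj. pose proof (branch_limit_near j a (m - j)) as Hnear. unfold branch in Hnear.
  replace (j + (m - j))%nat with m in Hnear by lia. exact Hnear.
Qed.

Section DistinctNodes.
Variables (j j' : nat) (a b : nat -> bool) (m : nat).
Hypotheses (Hj : (j <= m)%nat) (Hj' : (j' <= m)%nat)
  (Hnodes : (j, initial_bits a (m - j)) <> (j', initial_bits b (m - j'))).

Lemma limits_separated : radius m <= d (branch_limit j a) (branch_limit j' b).
Proof.
  destruct (stage_at_spec m) as [_ [_ [Hsep _]]].
  specialize (Hsep _ _ (limit_node_in_nodes j a m Hj) (limit_node_in_nodes j' b m Hj') Hnodes).
  pose proof (limit_near_stage j a m Hj). pose proof (limit_near_stage j' b m Hj').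
  set (c := stage_point (stage_at m) (j, initial_bits a (m - j))) in *.
  set (c' := stage_point (stage_at m) (j', initial_bits b (m - j'))) in *.
  pose proof (dist_triangle c (branch_limit j a) c').
  pose proof (dist_triangle (branch_limit j a) (branch_limit j' b) c').
  pose proof (dist_sym (branch_limit j' b) c'). unfold radius in *. lra.
Qed.

Lemma limits_scrambled_at :
  scrambled_at m (stage_ptime (stage_at m)) (stage_qtime (stage_at m))
    (branch_limit j a) (branch_limit j' b).
Proof.
  destruct (stage_at_spec m) as [_ [_ [_ Hscr]]].
  apply (Hscr _ _ _ _ (limit_node_in_nodes j a m Hj) (limit_node_in_nodes j' b m Hj') Hnodes);
    apply limit_near_stage; assumption.
Qed.

End DistinctNodes.

Lemma branch_limit_cantor j : cantor_set d (fun x => exists a, x = branch_limit j a).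
Proof.
  apply (cantor_set_of_coding (branch_limit j) (fun n => (/2) ^ n) (fun n => radius (j + S n))).
  - intros eps Heps. apply pow_lt_eventually; [lra| exact Heps].
  - intros a b n Hab.
    assert (Hbr : branch j a n = branch j b n).
    { unfold branch. rewrite (initial_bits_ext a b n Hab). reflexivity. }
    pose proof (branch_limit_near j a n). pose proof (branch_limit_near j b n).
    rewrite Hbr in *.
    pose proof (dist_triangle (branch_limit j a) (branch j b n) (branch_limit j b)).
    pose proof (dist_sym (branch_limit j a) (branch j b n)).
    pose proof (radius_bounds (j + n)).
    pose proof (pow_le_compat_decr (/2) (S n) (S (j + n)) ltac:(lra) ltac:(lia)).
    simpl pow in *. lra.
  - intros n. apply radius_bounds.
  - intros a b n Hab Habn. apply limits_separated; [lia| lia|].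
    replace (j + S n - j)%nat with (S n) by lia. rewrite !initial_bits_S, (initial_bits_ext a b n Hab).
    intros [= Hbits]. apply app_inj_tail in Hbits as [_ Hn]. congruence.
Qed.

Lemma distinct_limits_eventually_distinct_nodes j j' a b :
  branch_limit j a <> branch_limit j' b -> exists M, forall m, (M <= m)%nat ->
  (j <= m)%nat /\ (j' <= m)%nat /\ (j, initial_bits a (m - j)) <> (j', initial_bits b (m - j')).
Proof.
  intros Hne. destruct (Nat.eq_dec j j') as [<-|Hjj'].
  - assert (Hab : exists i, a i <> b i).
    { apply NNPP. intros Hall. apply Hne. f_equal. apply functional_extensionality. intros i.
      apply NNPP. intros Hi. apply Hall. eauto. }
    destruct Hab as [i Hi]. exists (j + S i)%nat. intros m Hm'. split; [lia| split; [lia|]].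
    intros [= Hbits]. apply (f_equal (fun l => nth i l false)) in Hbits.
    rewrite !nth_initial_bits in Hbits by lia. auto.
  - exists (max j j'). intros m Hm'. split; [lia| split; [lia|]]. intros [= Hjj'']. auto.
Qed.

Definition branch_limits (x : X) : Prop := exists j a, x = branch_limit j a.

Lemma branch_limits_sigma_cantor : sigma_cantor d branch_limits.
Proof.
  exists (fun j x => exists a, x = branch_limit j a). split; [apply branch_limit_cantor|].
  intros x. split; [intros [j [a Hx]]| intros [j [a Hx]]]; exists j, a; exact Hx.
Qed.

Lemma branch_limits_scrambled : uniformly_LY_scrambled d f branch_limits.
Proof.
  set (a0 := fun _ : nat => false). split.
  - exists (branch_limit 0 a0), (branch_limit 1 a0). split; [exists 0%nat, a0; reflexivity| split; [exists 1%nat, a0; reflexivity|]].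
    intros Heq.
    assert (Hsep : radius 1 <= d (branch_limit 0 a0) (branch_limit 1 a0)).
    { apply limits_separated; [lia| lia| intros [=]]. }
    rewrite Heq, dist_refl in Hsep. pose proof (radius_bounds 1). lra.
  - exists (fun m => stage_ptime (stage_at m)), (fun m => stage_qtime (stage_at m)).
    intros x y [j [a ->]] [j' [b ->]] Hne.
    destruct (distinct_limits_eventually_distinct_nodes j j' a b Hne) as [M HM]. split.
    + apply (is_lim_seq_0_of_lt_inv _ M); [intros; apply dist_ge0|].
      intros m Hm'. destruct (HM m Hm') as [H1 [H2 H3]]. apply (limits_scrambled_at j j' a b m); auto.
    + apply (is_lim_seq_infty_of_gt_INR _ M).
      intros m Hm'. destruct (HM m Hm') as [H1 [H2 H3]]. apply (limits_scrambled_at j j' a b m); auto.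
Qed.

Hypothesis He : forall x r, 0 < r -> forall J, exists j, (J <= j)%nat /\ d x (e j) < r.

Lemma branch_limits_dense : dense d branch_limits.
Proof.
  intros x eps Heps. destruct (pow_lt_eventually (/2) (eps / 2) ltac:(lra) ltac:(lra)) as [K HK].
  destruct (He x (eps / 2) ltac:(lra) K) as [j [Hj Hx]].
  set (a0 := fun _ : nat => false).
  exists (branch_limit j a0). split; [exists j, a0; reflexivity|].
  pose proof (branch_root j a0). pose proof (branch_limit_near j a0 O).
  rewrite Nat.add_0_r in *. pose proof (radius_bounds j).
  pose proof (pow_le_compat_decr (/2) K j ltac:(lra) Hj).
  pose proof (dist_triangle x (e j) (branch_limit j a0)).
  pose proof (dist_triangle (e j) (branch j a0 O) (branch_limit j a0)).
  simpl pow in *. lra.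
Qed.

End Construction.

Lemma dense_range_large_index (e : nat -> X) : dense d (fun x => exists n, e n = x) ->
  forall x r, 0 < r -> forall J, exists j, (J <= j)%nat /\ d x (e j) < r.
Proof.
  intros He x r Hr J.
  destruct (ball_avoiding_list (map e (seq 0 J)) x r Hr) as [z [rho [Hrho Hball]]].
  destruct (He z rho Hrho) as [y [[n <-] Hzy]]. destruct (Hball _ Hzy) as [Hx Hnew].
  exists n. split; auto.
  destruct (Nat.le_gt_cases J n) as [|HnJ]; auto.
  destruct Hnew. apply in_map, in_seq. lia.
Qed.

Lemma dense_Prox_Dk_scrambled_sigma_cantor : complete_metric d -> separable d ->
  (forall k, (2 <= k)%nat -> dense_k d k (Prox d f k) /\ dense_k d k (Dk d f k)) ->
  exists S, dense d S /\ sigma_cantor d S /\ uniformly_LY_scrambled d f S.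
Proof.
  intros Hcomp [D [[e He] HD]] HProxDk.
  assert (Hrange : dense d (fun x => exists n, e n = x)).
  { intros x eps Heps. destruct (HD x eps Heps) as [y [Dy Hxy]]. eauto. }
  exists (branch_limits e). split; [| split].
  - apply (branch_limits_dense Hcomp HProxDk), dense_range_large_index, Hrange.
  - apply (branch_limits_sigma_cantor Hcomp HProxDk).
  - apply (branch_limits_scrambled Hcomp HProxDk).
Qed.

End Metric.

Theorem theorem2p3 (X : Type) (d : X -> X -> R) (f : X -> X)
  (Hne : inhabited X)
  (Hmet : is_metric d) (Hcomp : complete_metric d) (Hsep : separable d)
  (Hniso : no_isolated_points d) (Hf : continuous_map d f) :
  let A1 := exists S, dense d S /\ uniformly_LY_scrambled d f S in
  let A2 := densely_uniformly_LY_chaotic d f in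
  let A3 := exists S, dense d S /\ sigma_cantor d S /\ uniformly_LY_scrambled d f S in
  let A4 := forall k : nat, (2 <= k)%nat ->
              dense_k d k (Prox d f k) /\ dense_k d k (Dk d f k) in
  (A1 <-> A2) /\ (A2 <-> A3) /\ (A3 <-> A4).
Proof.
  intros A1 A2 A3 A4.
  assert (H14 : A1 -> A4).
  { intros [S [HS Hscr]]. exact (dense_scrambled_Prox_Dk X d Hmet f Hniso S HS Hscr). }
  assert (H43 : A4 -> A3).
  { exact (dense_Prox_Dk_scrambled_sigma_cantor X d Hmet f Hf Hniso Hcomp Hsep). }
  assert (H32 : A3 -> A2).
  { intros [S [HS [Hsigma Hscr]]]. exists S. split; [exact HS| split; [| exact Hscr]].
    (* The scrambled set supplies a point. *)
    destruct Hscr as [[x [_ [Sx _]]] _]. apply (sigma_cantor_not_countable X d S Hsigma). eauto. }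
  assert (H21 : A2 -> A1).
  { intros [S [HS [_ Hscr]]]. exists S. auto. }
  tauto.
Qed.
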